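(* Let $\mathbf A=(A,\wedge,\vee,\cdot,1,\sim,-)$ be a complete perfect DInFL-algebra. Put $I_1=\{i\in J^\infty(\mathbf A)\mid i\leqslant 1\}$ and, for $a,b,c\in J^\infty(\mathbf A)$, define $a\preccurlyeq b$ iff $b\leqslant a$; $c\in a\circ b$ iff $c\leqslant a\cdot b$; $a^\sim={\sim}\kappa(a)$; and $a^-=-\kappa(a)$. Then $a^\sim,a^-\in J^\infty(\mathbf A)$ for all $a\in J^\infty(\mathbf A)$, and $\mathbf A_+=(J^\infty(\mathbf A),I_1,\preccurlyeq,\circ,{}^\sim,{}^-)$ is a DInFL-frame.
   Context: An InFL-algebra is a structure $(A,\wedge,\vee,\cdot,1,\sim,-)$ with $(A,\wedge,\vee)$ a lattice, $(A,\cdot,1)$ a monoid, and for all $a,b,c$: $a\cdot b\leqslant c\iff a\leqslant -(b\cdot{\sim}c)\iff b\leqslant{\sim}(-c\cdot a)$; a DInFL-algebra is one whose lattice reduct is distributive. $J^\infty(\mathbf A)$ and $M^\infty(\mathbf A)$ denote the completely join-irreducible and completely meet-irreducible elements of the lattice. A lattice is complete perfect if it is complete, every element is the join of the completely join-irreducibles below it, and the meet of the completely meet-irreducibles above it. For $j\in J^\infty(\mathbf A)$, $\kappa(j)=\bigvee\{a\in A\mid j\not\leqslant a\}$. For a set $W$ and $\circ:W\times W\to\mathcal P(W)$, $U\circ V=\bigcup\{a\circ b\mid a\in U,b\in V\}$, $x\circ V=\{x\}\circ V$, $U\circ y=U\circ\{y\}$; $x^{\sim-}$ means $(x^\sim)^-$.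 A DInFL-frame is a tuple $(W,I,\preccurlyeq,\circ,{}^\sim,{}^-)$ with $I\subseteq W$, $\preccurlyeq$ a partial order, $\circ:W\times W\to\mathcal P(W)$, ${}^\sim,{}^-:W\to W$, such that for all $u,v,x,y,z$: (F1) $x\preccurlyeq y$ iff $y\in I\circ x$ iff $y\in x\circ I$; (F2) $x\preccurlyeq y$, $x\in I$ imply $y\in I$; (F3) $x\preccurlyeq y$, $x\in u\circ v$ imply $y\in u\circ v$; (F4) $(x\circ y)\circ z=x\circ(y\circ z)$; (F5) $z^\sim\in x\circ y$ iff $y^-\in z\circ x$; (F6) $x^{\sim-}\preccurlyeq x$ and $x^{-\sim}\preccurlyeq x$. *)

(* Operations of an InFL-algebra (A, meet, join, mul, one, tl = ~, mi = -). *)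
Record InFL_ops (A : Type) := {
  meet : A -> A -> A;
  join : A -> A -> A;
  mul  : A -> A -> A;
  one  : A;
  tl   : A -> A;
  mi   : A -> A
}.
Arguments meet {A}. Arguments join {A}. Arguments mul {A}.
Arguments one {A}. Arguments tl {A}. Arguments mi {A}.

Definition le {A} (o : InFL_ops A) (a b : A) : Prop := meet o a b = a.

Definition is_lattice {A} (o : InFL_ops A) : Prop :=
  (forall a b c, meet o a (meet o b c) = meet o (meet o a b) c) /\
  (forall a b c, join o a (join o b c) = join o (join o a b) c) /\
  (forall a b, meet o a b = meet o b a) /\
  (forall a b, join o a b = join o b a) /\
  (forall a b, meet o a (join o a b) = a) /\
  (forall a b, join o a (meet o a b) = a).

Definition is_monoid {A} (o : InFL_ops A) : Prop :=
  (forall a b c, mul o a (mul o b c) = mul o (mul o a b) c) /\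
  (forall a, mul o (one o) a = a) /\
  (forall a, mul o a (one o) = a).

Definition is_InFL_algebra {A} (o : InFL_ops A) : Prop :=
  is_lattice o /\ is_monoid o /\
  (forall a b c,
     (le o (mul o a b) c <-> le o a (mi o (mul o b (tl o c)))) /\
     (le o a (mi o (mul o b (tl o c))) <-> le o b (tl o (mul o (mi o c) a)))).

Definition is_DInFL_algebra {A} (o : InFL_ops A) : Prop :=
  is_InFL_algebra o /\
  (forall a b c, meet o a (join o b c) = join o (meet o a b) (meet o a c)).

Definition is_lub {A} (o : InFL_ops A) (S : A -> Prop) (s : A) : Prop :=
  (forall x, S x -> le o x s) /\ (forall u, (forall x, S x -> le o x u) -> le o s u).

Definition is_glb {A} (o : InFL_ops A) (S : A -> Prop) (s : A) : Prop :=
  (forall x, S x -> le o s x) /\ (forall u, (forall x, S x -> le o u x) -> le o u s).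

Definition J_inf {A} (o : InFL_ops A) (j : A) : Prop :=
  forall S : A -> Prop, is_lub o S j -> S j.

Definition M_inf {A} (o : InFL_ops A) (m : A) : Prop :=
  forall S : A -> Prop, is_glb o S m -> S m.

Definition is_complete_with {A} (o : InFL_ops A) (sup : (A -> Prop) -> A) : Prop :=
  forall S, is_lub o S (sup S).

Definition is_perfect {A} (o : InFL_ops A) : Prop :=
  forall a, is_lub o (fun j => J_inf o j /\ le o j a) a /\
            is_glb o (fun m => M_inf o m /\ le o a m) a.

Definition kappa {A} (o : InFL_ops A) (sup : (A -> Prop) -> A) (j : A) : A :=
  sup (fun a => ~ le o j a).

(* DInFL-frame (W, I, prec, circ, ~, -), with W given as a predicate on a
   carrier X; [circ x y z] means z \in x o y.  All axioms relativised to W. *)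
Definition is_DInFL_frame {X} (W I : X -> Prop) (prec : X -> X -> Prop)
  (circ : X -> X -> X -> Prop) (ftl fmi : X -> X) : Prop :=
  (forall x, I x -> W x) /\
  (forall x y z, W x -> W y -> circ x y z -> W z) /\
  (forall x, W x -> W (ftl x)) /\
  (forall x, W x -> W (fmi x)) /\
  (forall x, W x -> prec x x) /\
  (forall x y, W x -> W y -> prec x y -> prec y x -> x = y) /\
  (forall x y z, W x -> W y -> W z -> prec x y -> prec y z -> prec x z) /\
  (forall x y, W x -> W y ->
     (prec x y <-> exists i, I i /\ circ i x y) /\
     ((exists i, I i /\ circ i x y) <-> exists i, I i /\ circ x i y)) /\
  (forall x y, W x -> W y -> prec x y -> I x -> I y) /\
  (forall u v x y, W u -> W v -> W x -> W y -> prec x y -> circ u v x -> circ u v y) /\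
  (forall x y z w, W x -> W y -> W z -> W w ->
     ((exists u, W u /\ circ x y u /\ circ u z w) <->
      (exists v, W v /\ circ y z v /\ circ x v w))) /\
  (forall x y z, W x -> W y -> W z -> (circ x y (ftl z) <-> circ z x (fmi y))) /\
  (forall x, W x -> prec (fmi (ftl x)) x /\ prec (ftl (fmi x)) x).

From Stdlib Require Import Classical.

(* In a complete perfect distributive lattice every completely join-irreducible
   j is completely join-prime, and kappa(j) is the largest element not above j;
   it is completely meet-irreducible, so a <= kappa(j) iff j is not below a.
   The involutions ~ and - are order-reversing bijections, hence map M^oo onto
   J^oo.  By residuation, multiplication preserves arbitrary joins in each
   argument, so join-primeness gives: j <= a.b iff j <= u.b for some
   J-element u <= a (and symmetrically); this yields F1 and F4.  Residuation
   reduces both sides of F5 to "z.x is not below -y", and the identities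
   kappa(~kappa(x)) = ~x, kappa(-kappa(x)) = -x give F6 with equality. *)

Section Lattice.
Context {A : Type} {o : InFL_ops A}.
Hypothesis Hl : is_lattice o.

Lemma meet_id a : meet o a a = a.
Proof.
  destruct Hl as (_ & _ & _ & _ & meet_join & join_meet).
  rewrite <- (join_meet a a) at 2. apply meet_join.
Qed.

Lemma le_refl a : le o a a.
Proof. exact (meet_id a). Qed.

Lemma le_antisym a b : le o a b -> le o b a -> a = b.
Proof.
  destruct Hl as (_ & _ & meetC & _). unfold le. intros hab hba.
  rewrite <- hab, meetC. exact hba.
Qed.

Lemma le_trans a b c : le o a b -> le o b c -> le o a c.
Proof.
  destruct Hl as (meetA & _). unfold le. intros hab hbc.
  rewrite <- hab, <- meetA, hbc. reflexivity.
Qed.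

Lemma le_ext a b : (forall x, le o x a <-> le o x b) -> a = b.
Proof. intro h. apply le_antisym; apply h, le_refl. Qed.

Lemma meet_lb_l a b : le o (meet o a b) a.
Proof.
  pose proof (meet_id a) as aa. destruct Hl as (meetA & _ & meetC & _). unfold le.
  rewrite meetC, meetA, aa. reflexivity.
Qed.

Lemma meet_lb_r a b : le o (meet o a b) b.
Proof. destruct Hl as (_ & _ & meetC & _). rewrite meetC. apply meet_lb_l. Qed.

Lemma meet_glb a b c : le o c a -> le o c b -> le o c (meet o a b).
Proof.
  destruct Hl as (meetA & _). unfold le. intros hca hcb.
  rewrite meetA, hca, hcb. reflexivity.
Qed.

Lemma le_iff_join a b : le o a b <-> join o a b = b.
Proof.
  destruct Hl as (_ & _ & meetC & joinC & meet_join & join_meet). unfold le.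
  split; intro h.
  - rewrite <- h, joinC, meetC. apply join_meet.
  - rewrite <- h. apply meet_join.
Qed.

Lemma join_ub_l a b : le o a (join o a b).
Proof. destruct Hl as (_ & _ & _ & _ & meet_join & _). apply meet_join. Qed.

Lemma join_ub_r a b : le o b (join o a b).
Proof. destruct Hl as (_ & _ & _ & joinC & _). rewrite joinC. apply join_ub_l. Qed.

Lemma join_lub a b c : le o a c -> le o b c -> le o (join o a b) c.
Proof.
  rewrite !le_iff_join. destruct Hl as (_ & joinA & _). intros hac hbc.
  rewrite <- joinA, hbc, hac. reflexivity.
Qed.

Lemma anti_iso_M_inf_J_inf (f g : A -> A) :
  (forall u v, le o u v -> le o (f v) (f u)) ->
  (forall u v, le o u v -> le o (g v) (g u)) ->
  (forall x, g (f x) = x) -> (forall x, f (g x) = x) ->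
  forall m, M_inf o m -> J_inf o (f m).
Proof.
  intros f_anti g_anti gf fg m Mm S [S_le S_least].
  apply (Mm (fun y => S (f y))). split.
  - intros y Sy. rewrite <- (gf m), <- (gf y). apply g_anti, S_le, Sy.
  - intros u hu. rewrite <- (gf u), <- (gf m). apply g_anti, S_least.
    intros s Ss. rewrite <- (fg s). apply f_anti, hu. rewrite fg. exact Ss.
Qed.

End Lattice.

Section InFL.
Context {A : Type} {o : InFL_ops A}.
Hypothesis HI : is_InFL_algebra o.
Let Hl : is_lattice o := proj1 HI.

Lemma mul_assoc a b c : mul o a (mul o b c) = mul o (mul o a b) c.
Proof. exact (proj1 (proj1 (proj2 HI)) a b c). Qed.

Lemma one_mul a : mul o (one o) a = a.
Proof. exact (proj1 (proj2 (proj1 (proj2 HI))) a). Qed.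

Lemma mul_one a : mul o a (one o) = a.
Proof. exact (proj2 (proj2 (proj1 (proj2 HI))) a). Qed.

Lemma mul_le_iff_l a b c : le o (mul o a b) c <-> le o a (mi o (mul o b (tl o c))).
Proof. exact (proj1 (proj2 (proj2 HI) a b c)). Qed.

Lemma mul_le_iff_r a b c : le o (mul o a b) c <-> le o b (tl o (mul o (mi o c) a)).
Proof. rewrite mul_le_iff_l. exact (proj2 (proj2 (proj2 HI) a b c)). Qed.

Lemma mi_tl c : mi o (tl o c) = c.
Proof.
  symmetry. apply (le_ext Hl). intro x.
  rewrite <- (mul_one x) at 1. rewrite mul_le_iff_l, one_mul. reflexivity.
Qed.

Lemma tl_mi c : tl o (mi o c) = c.
Proof.
  symmetry. apply (le_ext Hl). intro x.
  rewrite <- (one_mul x) at 1. rewrite mul_le_iff_r, mul_one. reflexivity.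
Qed.

Lemma mul_mono_l a a' b : le o a a' -> le o (mul o a b) (mul o a' b).
Proof.
  intro h. apply mul_le_iff_l, (le_trans Hl _ a'); [exact h|].
  apply mul_le_iff_l, le_refl, Hl.
Qed.

Lemma mul_mono_r a b b' : le o b b' -> le o (mul o a b) (mul o a b').
Proof.
  intro h. apply mul_le_iff_r, (le_trans Hl _ b'); [exact h|].
  apply mul_le_iff_r, le_refl, Hl.
Qed.

Lemma mul_le_tl_one a b : le o (mul o a b) (tl o (one o)) <-> le o b (tl o a).
Proof. rewrite mul_le_iff_r, mi_tl, one_mul. reflexivity. Qed.

Lemma mul_le_mi_one a b : le o (mul o a b) (mi o (one o)) <-> le o a (mi o b).
Proof. rewrite mul_le_iff_l, tl_mi, mul_one. reflexivity. Qed.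

Lemma tl_antitone a b : le o a b -> le o (tl o b) (tl o a).
Proof.
  intro h. apply mul_le_tl_one, (le_trans Hl _ (mul o b (tl o b))).
  - apply mul_mono_l, h.
  - apply mul_le_tl_one, le_refl, Hl.
Qed.

Lemma mi_antitone a b : le o a b -> le o (mi o b) (mi o a).
Proof.
  intro h. apply mul_le_mi_one, (le_trans Hl _ (mul o (mi o b) b)).
  - apply mul_mono_r, h.
  - apply mul_le_mi_one, le_refl, Hl.
Qed.

Lemma tl_le_tl a b : le o (tl o b) (tl o a) <-> le o a b.
Proof.
  split; [|apply tl_antitone].
  intro h. rewrite <- (mi_tl a), <- (mi_tl b). apply mi_antitone, h.
Qed.

Lemma mi_le_mi a b : le o (mi o b) (mi o a) <-> le o a b.
Proof.
  split; [|apply mi_antitone].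
  intro h. rewrite <- (tl_mi a), <- (tl_mi b). apply tl_antitone, h.
Qed.

Lemma le_mi_iff_le_tl a b : le o a (mi o b) <-> le o b (tl o a).
Proof. rewrite <- tl_le_tl, tl_mi. reflexivity. Qed.

Lemma tl_le_iff_mi_le a b : le o (tl o a) b <-> le o (mi o b) a.
Proof. rewrite <- mi_le_mi, mi_tl. reflexivity. Qed.

Lemma mi_le_iff_tl_le a b : le o (mi o a) b <-> le o (tl o b) a.
Proof. rewrite <- tl_le_tl, tl_mi. reflexivity. Qed.

Lemma mul_le_mi a b c : le o (mul o a b) (mi o c) <-> le o a (mi o (mul o b c)).
Proof. rewrite mul_le_iff_l, tl_mi. reflexivity. Qed.

Lemma is_lub_mul_l S x b : is_lub o S x ->
  is_lub o (fun z => exists s, S s /\ z = mul o s b) (mul o x b).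
Proof.
  intros [S_le S_least]. split.
  - intros z [s [Ss ->]]. apply mul_mono_l, S_le, Ss.
  - intros u hu. apply mul_le_iff_l, S_least. intros s Ss.
    apply mul_le_iff_l, hu. eauto.
Qed.

Lemma is_lub_mul_r S x a : is_lub o S x ->
  is_lub o (fun z => exists s, S s /\ z = mul o a s) (mul o a x).
Proof.
  intros [S_le S_least]. split.
  - intros z [s [Ss ->]]. apply mul_mono_r, S_le, Ss.
  - intros u hu. apply mul_le_iff_r, S_least. intros s Ss.
    apply mul_le_iff_r, hu. eauto.
Qed.

End InFL.

Section CompletePerfect.
Context {A : Type} {o : InFL_ops A} (sup : (A -> Prop) -> A).
Hypotheses (Hl : is_lattice o)
  (Hd : forall a b c, meet o a (join o b c) = join o (meet o a b) (meet o a c))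
  (Hc : is_complete_with o sup) (Hp : is_perfect o).

Lemma sup_lower_bounds_is_glb S : is_glb o S (sup (fun x => forall y, S y -> le o x y)).
Proof.
  split.
  - intros x Sx. apply (proj2 (Hc _)). intros y hy. apply hy, Sx.
  - intros u hu. apply (proj1 (Hc _)). exact hu.
Qed.

Lemma meet_join_le_join_meet m a b :
  le o (meet o (join o m a) (join o m b)) (join o m (meet o a b)).
Proof.
  destruct Hl as (_ & _ & meetC & _).
  rewrite Hd. apply (join_lub Hl).
  - apply (le_trans Hl _ m); [apply (meet_lb_r Hl) | apply (join_ub_l Hl)].
  - rewrite meetC, Hd. apply (join_lub Hl).
    + apply (le_trans Hl _ m); [apply (meet_lb_r Hl) | apply (join_ub_l Hl)].
    + rewrite meetC. apply (join_ub_r Hl).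
Qed.

(* [m] differs from the meet of the elements strictly above it, which lies
   below both [join m a] and [join m b]. *)
Lemma M_inf_meet_prime m a b :
  M_inf o m -> le o (meet o a b) m -> le o a m \/ le o b m.
Proof.
  intros Mm hab. apply NNPP. intros [na nb]%not_or_and.
  set (U := fun y => le o m y /\ y <> m).
  assert (glbU := sup_lower_bounds_is_glb U).
  set (ms := sup _) in glbU.
  assert (U_join : forall c, ~ le o c m -> U (join o m c)).
  { intros c nc. split; [apply (join_ub_l Hl)|].
    intro E. apply nc. rewrite <- E. apply (join_ub_r Hl). }
  assert (ms_ne : ms <> m).
  { intro E. rewrite E in glbU. apply Mm in glbU. now destruct glbU. }
  apply ms_ne, (le_antisym Hl).
  - apply (le_trans Hl _ (meet o (join o m a) (join o m b))).
    + apply (meet_glb Hl); apply (proj1 glbU); auto.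
    + apply (le_trans Hl _ _ _ (meet_join_le_join_meet m a b)).
      apply (join_lub Hl); [apply (le_refl Hl) | exact hab].
  - apply (proj2 glbU). now intros x [h _].
Qed.

(* [m] is taken above the join of the elements strictly below [j]; that join is
   not above [j], so by perfectness some M-element above it misses [j]. *)
Lemma J_inf_kappa_le_M_inf j : J_inf o j ->
  exists m, M_inf o m /\ ~ le o j m /\ le o (kappa o sup j) m.
Proof.
  intro Jj.
  set (L := fun x => le o x j /\ x <> j).
  assert (lubL := Hc L). set (js := sup L) in lubL.
  assert (js_le : le o js j) by (apply (proj2 lubL); now intros x [h _]).
  assert (j_nle : ~ le o j js).
  { intro h. rewrite (le_antisym Hl _ _ js_le h) in lubL. now destruct (Jj _ lubL). }
  destruct (classic (exists m, (M_inf o m /\ le o js m) /\ ~ le o j m))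
    as [[m [[Mm js_m] j_m]] | none].
  2:{ exfalso. apply j_nle, (proj2 (proj2 (Hp js))).
      intros m hm. apply NNPP. intro. apply none. eauto. }
  exists m. split; [exact Mm|]. split; [exact j_m|].
  apply (proj2 (Hc _)). intros a ja.
  assert (meet_m : le o (meet o j a) m).
  { apply (le_trans Hl _ js); [|exact js_m]. apply (proj1 lubL). split.
    - apply (meet_lb_l Hl).
    - intro E. apply ja. rewrite <- E. apply (meet_lb_r Hl). }
  now destruct (M_inf_meet_prime _ _ _ Mm meet_m).
Qed.

Lemma le_kappa_iff j a : J_inf o j -> le o a (kappa o sup j) <-> ~ le o j a.
Proof.
  intro Jj. destruct (J_inf_kappa_le_M_inf j Jj) as [m [_ [j_m k_m]]]. split.
  - intros h ja. apply j_m, (le_trans Hl _ a); [exact ja|].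
    exact (le_trans Hl _ _ _ h k_m).
  - intro h. apply (proj1 (Hc _)). exact h.
Qed.

Lemma M_inf_kappa j : J_inf o j -> M_inf o (kappa o sup j).
Proof.
  intro Jj. destruct (J_inf_kappa_le_M_inf j Jj) as [m [Mm [j_m k_m]]].
  replace (kappa o sup j) with m; [exact Mm|].
  apply (le_antisym Hl); [apply (proj1 (Hc _)), j_m | exact k_m].
Qed.

Lemma J_inf_join_prime j S x :
  J_inf o j -> is_lub o S x -> le o j x -> exists s, S s /\ le o j s.
Proof.
  intros Jj lubS jx. apply NNPP. intro none.
  apply (le_kappa_iff j x Jj); [|exact jx].
  apply (proj2 lubS). intros s Ss. apply (le_kappa_iff j s Jj). eauto.
Qed.

End CompletePerfect.

Section Frame.
Context {A : Type} {o : InFL_ops A} (sup : (A -> Prop) -> A).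
Hypotheses (HD : is_DInFL_algebra o) (Hc : is_complete_with o sup) (Hp : is_perfect o).
Let HI : is_InFL_algebra o := proj1 HD.
Let Hl : is_lattice o := proj1 HI.
Let le_kappa := le_kappa_iff sup Hl (proj2 HD) Hc Hp.
Let join_prime := J_inf_join_prime sup Hl (proj2 HD) Hc Hp.

Lemma J_inf_le_mul_l w a b : J_inf o w ->
  le o w (mul o a b) <-> exists u, J_inf o u /\ le o u a /\ le o w (mul o u b).
Proof.
  intro Jw. split.
  - intro h. destruct (join_prime _ _ _ Jw (is_lub_mul_l HI _ _ b (proj1 (Hp a))) h)
      as [z [[u [[Ju ua] ->]] wz]]. eauto.
  - intros [u [_ [ua wu]]]. apply (le_trans Hl _ _ _ wu), (mul_mono_l HI), ua.
Qed.

Lemma J_inf_le_mul_r w a b : J_inf o w ->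
  le o w (mul o a b) <-> exists u, J_inf o u /\ le o u b /\ le o w (mul o a u).
Proof.
  intro Jw. split.
  - intro h. destruct (join_prime _ _ _ Jw (is_lub_mul_r HI _ _ a (proj1 (Hp b))) h)
      as [z [[u [[Ju ub] ->]] wz]]. eauto.
  - intros [u [_ [ub wu]]]. apply (le_trans Hl _ _ _ wu), (mul_mono_r HI), ub.
Qed.

Lemma J_inf_tl_kappa j : J_inf o j -> J_inf o (tl o (kappa o sup j)).
Proof.
  intro Jj. apply (anti_iso_M_inf_J_inf (tl o) (mi o)).
  - apply (tl_antitone HI).
  - apply (mi_antitone HI).
  - apply (mi_tl HI).
  - apply (tl_mi HI).
  - apply (M_inf_kappa sup Hl (proj2 HD) Hc Hp), Jj.
Qed.

Lemma J_inf_mi_kappa j : J_inf o j -> J_inf o (mi o (kappa o sup j)).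
Proof.
  intro Jj. apply (anti_iso_M_inf_J_inf (mi o) (tl o)).
  - apply (mi_antitone HI).
  - apply (tl_antitone HI).
  - apply (tl_mi HI).
  - apply (mi_tl HI).
  - apply (M_inf_kappa sup Hl (proj2 HD) Hc Hp), Jj.
Qed.

Lemma kappa_tl_kappa j : J_inf o j -> kappa o sup (tl o (kappa o sup j)) = tl o j.
Proof.
  intro Jj. apply (le_ext Hl). intro a.
  rewrite (le_kappa _ _ (J_inf_tl_kappa j Jj)), (tl_le_iff_mi_le HI),
    (le_kappa _ _ Jj), (le_mi_iff_le_tl HI).
  split; [apply NNPP | tauto].
Qed.

Lemma kappa_mi_kappa j : J_inf o j -> kappa o sup (mi o (kappa o sup j)) = mi o j.
Proof.
  intro Jj. apply (le_ext Hl). intro a.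
  rewrite (le_kappa _ _ (J_inf_mi_kappa j Jj)), (mi_le_iff_tl_le HI),
    (le_kappa _ _ Jj), <- (le_mi_iff_le_tl HI).
  split; [apply NNPP | tauto].
Qed.

(* Both sides say that [mul z x] is not below [mi y]. *)
Lemma tl_kappa_le_mul_iff x y z : J_inf o y -> J_inf o z ->
  le o (tl o (kappa o sup z)) (mul o x y) <-> le o (mi o (kappa o sup y)) (mul o z x).
Proof.
  intros Jy Jz.
  rewrite (tl_le_iff_mi_le HI), (le_kappa _ _ Jz), <- (mul_le_mi HI),
    (mi_le_iff_tl_le HI), (le_kappa _ _ Jy), <- (le_mi_iff_le_tl HI).
  reflexivity.
Qed.

Lemma J_inf_le_iff_unit_mul x y : J_inf o y ->
  le o y x <-> exists i, (J_inf o i /\ le o i (one o)) /\ (J_inf o y /\ le o y (mul o i x)).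
Proof.
  intro Jy. rewrite <- (one_mul HI x) at 1. rewrite (J_inf_le_mul_l _ _ _ Jy). firstorder.
Qed.

Lemma J_inf_le_iff_mul_unit x y : J_inf o y ->
  le o y x <-> exists i, (J_inf o i /\ le o i (one o)) /\ (J_inf o y /\ le o y (mul o x i)).
Proof.
  intro Jy. rewrite <- (mul_one HI x) at 1. rewrite (J_inf_le_mul_r _ _ _ Jy). firstorder.
Qed.

Lemma J_inf_le_mul_assoc x y z w : J_inf o w ->
  (exists u, J_inf o u /\ (J_inf o u /\ le o u (mul o x y)) /\ (J_inf o w /\ le o w (mul o u z))) <->
  (exists v, J_inf o v /\ (J_inf o v /\ le o v (mul o y z)) /\ (J_inf o w /\ le o w (mul o x v))).
Proof.
  intro Jw. transitivity (le o w (mul o x (mul o y z))).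
  - rewrite (mul_assoc HI), (J_inf_le_mul_l _ _ _ Jw). firstorder.
  - rewrite (J_inf_le_mul_r _ _ _ Jw). firstorder.
Qed.

End Frame.

Theorem mainTheorem5 (A : Type) (o : InFL_ops A) (sup : (A -> Prop) -> A)
  (HD : is_DInFL_algebra o) (Hc : is_complete_with o sup) (Hp : is_perfect o) :
  (forall a, J_inf o a -> J_inf o (tl o (kappa o sup a)) /\ J_inf o (mi o (kappa o sup a))) /\
  is_DInFL_frame (J_inf o)
    (fun i => J_inf o i /\ le o i (one o))
    (fun a b => le o b a)
    (fun a b c => J_inf o c /\ le o c (mul o a b))
    (fun a => tl o (kappa o sup a))
    (fun a => mi o (kappa o sup a)).
Proof.
  pose proof (proj1 HD) as HI. pose proof (proj1 HI) as Hl.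
  split; [intros a Ja; split; [apply J_inf_tl_kappa | apply J_inf_mi_kappa]; assumption|].
  unfold is_DInFL_frame. repeat match goal with |- _ /\ _ => split end.
  - now intros x [Jx _].
  - now intros x y z _ _ [Jz _].
  - now apply J_inf_tl_kappa.
  - now apply J_inf_mi_kappa.
  - intros x _. apply (le_refl Hl).
  - intros x y _ _ yx xy. now apply (le_antisym Hl).
  - intros x y z _ _ _ yx zy. now apply (le_trans Hl _ y).
  - intros x y _ Jy. rewrite <- (J_inf_le_iff_unit_mul sup HD Hc Hp x y Jy),
      <- (J_inf_le_iff_mul_unit sup HD Hc Hp x y Jy). tauto.
  - intros x y _ Jy yx [_ x1]. split; [assumption|]. now apply (le_trans Hl _ x).
  - intros u v x y _ _ _ Jy yx [_ xuv]. split; [assumption|]. now apply (le_trans Hl _ x).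
  - intros x y z w _ _ _ Jw. exact (J_inf_le_mul_assoc sup HD Hc Hp x y z w Jw).
  - intros x y z _ Jy Jz. rewrite (tl_kappa_le_mul_iff sup HD Hc Hp x y z Jy Jz).
    split; intros [_ h]; split; auto using J_inf_tl_kappa, J_inf_mi_kappa.
  - intros x Jx. split.
    + rewrite (kappa_tl_kappa sup HD Hc Hp x Jx), (mi_tl HI). apply (le_refl Hl).
    + rewrite (kappa_mi_kappa sup HD Hc Hp x Jx), (tl_mi HI). apply (le_refl Hl).
Qed.
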